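(* Let $M$ be a finite abelian group, $c\in\hat{M}$ with $c^2=1$, and $i\colon\hat{M}\setminus\{c\}\to\hat{M}\setminus\{1\}$ a bijection with $i(x)=x\,i(x^{-1})$ for all $x\ne c$. Let $F=\hat{M}\sqcup\{0\}$ with multiplication extending that of $\hat{M}$ by $0\cdot x=x\cdot0=0$, and with the operation $\oplus$ for which $0$ is the identity and, for $x,y\ne0$, $x\oplus y=0$ if $x=cy$ and $x\oplus y=x\,i(x/y)^{-1}$ otherwise. Then: (a) $\oplus$ is commutative; (b) $z(x\oplus y)=(zx)\oplus(zy)$ for all $x,y,z\in F$; (c) for every $x\in F$, $x\oplus cx=0$.
   Context: $\hat{M}$ is the Pontryagin dual of $M$, written multiplicatively with identity $1$. *)

From mathcomp Require Import all_boot all_fingroup.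
Set Implicit Arguments. Unset Strict Implicit. Unset Printing Implicit Defensive.

(* The group \hat{M} is represented by a finite group [gT] (assumed abelian
   in the theorem).  F = \hat{M} ⊔ {0} is represented by [option gT],
   with [None] playing the role of 0. *)

Local Open Scope group_scope.

Definition mulF (gT : finGroupType) (x y : option gT) : option gT :=
  match x, y with
  | Some a, Some b => Some (a * b)
  | _, _ => None
  end.

Definition oplusF (gT : finGroupType) (c : gT) (i : gT -> gT)
    (x y : option gT) : option gT :=
  match x, y with
  | None, _ => y
  | _, None => x
  | Some a, Some b =>
      if a == c * b then None else Some (a * (i (a * b^-1))^-1)
  end.

From mathcomp Require Import all_boot all_fingroup.

(* Commutativity of [x ⊕ y] for [x != c y] is the identity
   [x i(x/y)^-1 = y i(y/x)^-1], which is the functional equation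
   [i(x/y) = (x/y) i(y/x)]; [x ⊕ y = 0] is symmetric in x and y because
   [c^2 = 1]. Multiplying both arguments by z leaves [x/y] unchanged, which
   gives distributivity. *)

Local Open Scope group_scope.

Section OplusF.

Variables (gT : finGroupType) (c : gT) (i : gT -> gT).
Hypothesis gT_abelian : abelian [set: gT].
Hypothesis c2 : c ^+ 2 = 1.
Hypothesis i_eq : forall x, x != c -> i x = x * i x^-1.

Let mulgC (x y : gT) : x * y = y * x.
Proof. by apply: (centsP gT_abelian); rewrite inE. Qed.

Lemma mulcK (x : gT) : c * (c * x) = x.
Proof. by rewrite mulgA -expg2 c2 mul1g. Qed.

Lemma eq_mulc_sym (x y : gT) : (x == c * y) = (y == c * x).
Proof. by apply/eqP/eqP => ->; rewrite mulcK. Qed.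

Lemma eq_divg_c (x y : gT) : (x * y^-1 == c) = (x == c * y).
Proof. by rewrite -(inj_eq (mulIg y)) mulgKV. Qed.

Lemma mulg_divg_i (x y : gT) :
  x * y^-1 != c -> x * (i (x * y^-1))^-1 = y * (i (y * x^-1))^-1.
Proof.
move=> xy_c; rewrite i_eq // invMg invMg invgK.
by set j := (i _)^-1; rewrite (mulgC j) (mulgC y x^-1) mulgA mulKVg.
Qed.

Lemma oplusFC (x y : option gT) : oplusF c i x y = oplusF c i y x.
Proof.
case: x y => [x|] [y|] //=; rewrite eq_mulc_sym.
by case: eqP => // /eqP; rewrite -eq_divg_c => /mulg_divg_i->.
Qed.

Lemma mulF_oplusF (x y z : option gT) :
  mulF z (oplusF c i x y) = oplusF c i (mulF z x) (mulF z y).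
Proof.
case: x y z => [x|] [y|] [z|] //=.
have -> : (z * x == c * (z * y)) = (x == c * y).
  by rewrite mulgA (mulgC c z) -mulgA (inj_eq (mulgI z)).
have -> : z * x * (z * y)^-1 = x * y^-1.
  by rewrite invMg (mulgC y^-1) mulgA (mulgC z x) mulgK.
by case: eqP => //; rewrite mulgA.
Qed.

Lemma oplusF_mulc (x : option gT) : oplusF c i x (mulF (Some c) x) = None.
Proof. by case: x => [x|] //=; rewrite mulcK eqxx. Qed.

End OplusF.

Theorem mainTheorem9 (gT : finGroupType) (hab : abelian [set: gT])
    (c : gT) (hc : c ^+ 2 = 1) (i : gT -> gT)
    (i_inj : {in [pred x | x != c] &, injective i})
    (i_into : forall x, x != c -> i x != 1)
    (i_onto : forall y, y != 1 -> exists2 x, x != c & i x = y)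
    (i_eq : forall x, x != c -> i x = x * i x^-1) :
  [/\ (forall x y : option gT, oplusF c i x y = oplusF c i y x),
      (forall x y z : option gT,
          mulF z (oplusF c i x y) = oplusF c i (mulF z x) (mulF z y))
    & (forall x : option gT, oplusF c i x (mulF (Some c) x) = None)].
Proof.
split; [exact: oplusFC | exact: mulF_oplusF | exact: oplusF_mulc].
Qed.
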